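(* Let $n\in\mathbb{N}$ with $n\geq 2$. Then (i) $|\mu_{n}(1212)|=\sum_{k=0}^{n-2}\left((2k+1)C_{k}C_{n-k-2}+C_{k}|\mu_{n-k-1}(1212)|\right)$; (ii) as formal power series, $\mu(1212,z)=\dfrac{z(C(z)-1)}{(1-2zC(z))(1-zC(z))}$; (iii) $|\mu_{n}(1212)|=\binom{2n-1}{n-2}$.
   Context: A matching of order $n$ is a partition of $[2n]$ into blocks (edges) of size two, identified with the word in $[n]^{2n}$ where both vertices of an edge carry the same letter and letters appear in increasing order of left vertices; $1212$ is the matching $\{\{1,3\},\{2,4\}\}$. A matching $\sigma$ of order $k$ is a pattern of $\tau$ if there are $i_1<\dots<i_{2k}$ with $\{i_p,i_q\}\in\tau$ iff $\{p,q\}\in\sigma$. The rightmost edge of a matching is the edge with the largest right vertex. A matching $\lambda$ minimally contains $\sigma$ if it contains $\sigma$ and deleting its rightmost edge yields a matching not containing $\sigma$; $\mu_n(\sigma)$ is the set of such matchings of order $n$ and $\mu(\sigma,z)=\sum_{n\ge0}|\mu_n(\sigma)|z^n$. $C_n=\frac{1}{n+1}\binom{2n}{n}$ is the $n$-th Catalan number and $C(z)=\sum_{n\ge0}C_nz^n$. *)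

From mathcomp Require Import all_boot all_order all_algebra.
Set Implicit Arguments. Unset Strict Implicit. Unset Printing Implicit Defensive.
Import GRing.Theory Num.Theory.

Definition is_matching (n : nat) (m : {ffun 'I_(n.*2) -> 'I_(n.*2)}) : bool :=
  [forall i, (m i != i) && (m (m i) == i)].

Definition contains (n k : nat) (tau : {ffun 'I_(n.*2) -> 'I_(n.*2)})
    (sigma : {ffun 'I_(k.*2) -> 'I_(k.*2)}) : bool :=
  [exists g : {ffun 'I_(k.*2) -> 'I_(n.*2)},
     [forall p : 'I_(k.*2), forall q : 'I_(k.*2),
        ((p < q)%N ==> (g p < g q)%N) && ((tau (g p) == g q) == (sigma p == q))]].

(* The rightmost edge is the
   edge containing the last position ord_max (= 2n+1), which is necessarily a
   right vertex; its partner is j = tau ord_max. *)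
Definition del_rightmost (n : nat) (tau : {ffun 'I_(n.+1.*2) -> 'I_(n.+1.*2)})
  : {ffun 'I_(n.*2) -> 'I_(n.*2)} :=
  let j : nat := tau ord_max in
  [ffun i : 'I_(n.*2) =>
     insubd i (unbump j (tau (inord (bump j i) : 'I_(n.+1.*2))))].

(* |mu_n(sigma)| : number of matchings of order n minimally containing sigma.
   For n = 0 there is no rightmost edge, so mu_0(sigma) is empty. *)
Definition mu_card (k : nat) (sigma : {ffun 'I_(k.*2) -> 'I_(k.*2)}) (n : nat)
  : nat :=
  match n with
  | 0 => 0
  | n'.+1 => #|[set lam : {ffun 'I_(n'.+1.*2) -> 'I_(n'.+1.*2)} |
                 [&& is_matching lam, contains lam sigma &
                     ~~ contains (del_rightmost lam) sigma]]|
  end.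

(* The matching 1212 = {{1,3},{2,4}}; with 0-based positions: 0<->2, 1<->3. *)
Definition m1212 : {ffun 'I_(2.*2) -> 'I_(2.*2)} :=
  [ffun i : 'I_4 => inord ((i + 2) %% 4)].

Definition catalan (n : nat) : nat := 'C(n.*2, n) %/ n.+1.

Definition fps := nat -> rat.
Local Open Scope ring_scope.
Definition fps_const (c : rat) : fps := fun n => if n is 0%N then c else 0.
Definition fps_X : fps := fun n => if n == 1%N then 1 else 0.
Definition fps_add (a b : fps) : fps := fun n => a n + b n.
Definition fps_sub (a b : fps) : fps := fun n => a n - b n.
Definition fps_scale (c : rat) (a : fps) : fps := fun n => c * a n.
Definition fps_mul (a b : fps) : fps :=
  fun n => \sum_(i < n.+1) a i * b (n - i)%N.
Fixpoint fps_inv_list (a : fps) (n : nat) : seq rat :=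
  match n with
  | 0 => [:: (a 0%N)^-1]
  | n'.+1 => let l := fps_inv_list a n' in
             rcons l (- (a 0%N)^-1 *
                      \sum_(i < n'.+1) a i.+1 * nth 0 l (n' - i)%N)
  end.
Definition fps_inv (a : fps) : fps := fun n => nth 0 (fps_inv_list a n) n.

Definition catalan_gf : fps := fun n => (catalan n)%:R.
Definition mu_gf (k : nat) (sigma : {ffun 'I_(k.*2) -> 'I_(k.*2)}) : fps :=
  fun n => (mu_card sigma n)%:R.

From mathcomp Require Import all_boot all_order all_algebra zify lra.
Set Implicit Arguments. Unset Strict Implicit. Unset Printing Implicit Defensive.
Import GRing.Theory.

(* A matching contains 1212 iff it has a crossing.  Deleting the rightmost
   edge is undone by adding a new last position together with a partner at
   one of the N+1 gaps of a matching on N positions, and the result crosses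
   iff the old matching crosses or the chosen gap is covered by an edge.
   Hence the minimal 1212-containers of order n+1 are the noncrossing
   matchings of order n with one marked covered gap, and
   |mu_(n+1)| + NC_(n+1) = (2n+1) NC_n.  Following the number of uncovered
   gaps through the same insertion gives a ballot recursion showing
   NC_n = C_n.  So |mu_(n+1)| = (2n+1) C_n - C_(n+1) = binom(2n+1, n-1), and
   (i) and (ii) reduce to the Catalan convolution and to
   (n+2) C_(n+1) = 2 (2n+1) C_n. *)

Lemma bumpE h i : bump h i = if h <= i then i.+1 else i.
Proof. by rewrite /bump; case: leqP. Qed.

Lemma unbumpE h i : unbump h i = if h < i then i.-1 else i.
Proof. by rewrite /unbump; case: ltnP => _; rewrite ?subn1 ?subn0. Qed.

Lemma bump0 i : bump 0 i = i.+1. Proof. by []. Qed.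

Ltac bump_lia := rewrite ?bumpE ?unbumpE; repeat (case: ifP; intro); intros; lia.

Lemma ltn_bump2 h i j : (bump h i < bump h j) = (i < j).
Proof. by rewrite !bumpE; case: (leqP h i); case: (leqP h j); lia. Qed.

(* Matchings on an arbitrary number N of positions; for N = n.*2 these are
   convertible to is_matching, contains and del_rightmost. *)
Definition is_matchingN N (m : {ffun 'I_N -> 'I_N}) : bool :=
  [forall i, (m i != i) && (m (m i) == i)].

Definition containsN N K (tau : {ffun 'I_N -> 'I_N})
    (sigma : {ffun 'I_K -> 'I_K}) : bool :=
  [exists g : {ffun 'I_K -> 'I_N},
     [forall p : 'I_K, forall q : 'I_K,
        ((p < q)%N ==> (g p < g q)%N) && ((tau (g p) == g q) == (sigma p == q))]].

Definition del_rightmostN N (tau : {ffun 'I_N.+2 -> 'I_N.+2}) : {ffun 'I_N -> 'I_N} :=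
  let j : nat := tau ord_max in
  [ffun i : 'I_N => insubd i (unbump j (tau (inord (bump j i) : 'I_N.+2)))].

Definition crossing N (m : {ffun 'I_N -> 'I_N}) : bool :=
  [exists a : 'I_N, exists b : 'I_N, (a < b) && (b < m a) && (m a < m b)].

Lemma is_matchingNP N (m : {ffun 'I_N -> 'I_N}) :
  reflect ((forall i, m i != i) /\ involutive m) (is_matchingN m).
Proof.
apply: (iffP forallP) => [mm | [fpf inv] i]; last by rewrite fpf inv eqxx.
by split=> i; case/andP: (mm i) => // _ /eqP.
Qed.

Lemma m1212E (p : 'I_4) : val (m1212 p) = (p + 2) %% 4.
Proof. by rewrite ffunE; apply: inordK; rewrite ltn_mod. Qed.

Lemma containsN_m1212 N (m : {ffun 'I_N -> 'I_N}) :
  is_matchingN m -> containsN m m1212 = crossing m.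
Proof.
move=> /is_matchingNP[_ inv]; apply/existsP/existsP.
- case=> g /forallP gP.
  have g_mono (p q : 'I_4) : p < q -> g p < g q.
    by move=> pq; case/andP: (forallP (gP p) q) => /implyP/(_ pq).
  have g_edge (p q : 'I_4) : (p + 2) %% 4 = q -> m (g p) = g q.
    move=> pq; apply/eqP; case/andP: (forallP (gP p) q) => _ /eqP ->.
    by apply/eqP/val_inj; rewrite m1212E.
  exists (g (@Ordinal 4 0 isT)); apply/existsP; exists (g (@Ordinal 4 1 isT)).
  rewrite (g_edge _ (@Ordinal 4 2 isT)) // (g_edge _ (@Ordinal 4 3 isT)) //.
  by rewrite !g_mono.
- case=> a /existsP[b /andP[/andP[ab bma] mab]].
  pose g := [ffun p : 'I_4 => nth a [:: a; b; m a; m b] p].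
  have g_mono (p q : 'I_4) : p < q -> g p < g q.
    by case: p q => [[|[|[|[|p]]]] ?] // [[|[|[|[|q]]]] ?] //; rewrite !ffunE /=; lia.
  have g_inj : injective g.
    move=> p q gpq; apply: val_inj; apply/eqP; rewrite eqn_leq.
    by apply/andP; split; rewrite leqNgt; apply/negP => /g_mono; rewrite gpq ltnn.
  have g_edge p : m (g p) = g (m1212 p).
    rewrite !ffunE inordK ?ltn_mod //.
    by case: p => [[|[|[|[|p]]]] Hp] //=; rewrite inv.
  exists g; apply/forallP => p; apply/forallP => q.
  by rewrite g_edge (inj_eq g_inj) eqxx andbT; apply/implyP/g_mono.
Qed.

(* Extended by 0 outside 'I_N, which has no default element when N = 0. *)
Definition fun_nat N (M : {ffun 'I_N -> 'I_N}) (k : nat) : nat :=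
  if insub k is Some o then nat_of_ord (M o) else 0.

Lemma fun_natE N (M : {ffun 'I_N -> 'I_N}) (k : 'I_N) : fun_nat M k = M k.
Proof. by rewrite /fun_nat valK. Qed.

Definition ins_rightmost N (M : {ffun 'I_N -> 'I_N}) (j : 'I_N.+1) :
    {ffun 'I_N.+2 -> 'I_N.+2} :=
  [ffun i : 'I_N.+2 => inord (if i == ord_max then nat_of_ord j
                              else if i == j :> nat then N.+1
                              else bump j (fun_nat M (unbump j i)))].

Lemma ins_positionP N (j : 'I_N.+1) (i : 'I_N.+2) :
  [\/ i = ord_max, i = j :> nat | exists k : 'I_N, i = bump j k :> nat].
Proof.
case: (eqVneq i ord_max) => [->|im]; first by constructor 1.
case: (eqVneq (i : nat) j) => [->|ij]; first by constructor 2.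
constructor 3; rewrite -val_eqE /= in im.
have ltk : unbump j i < N.
  by move/eqP: im; move/eqP: ij; move: (ltn_ord i) (ltn_ord j); bump_lia.
by exists (Ordinal ltk); rewrite /= unbumpK.
Qed.

Section Insertion.
Variables (N : nat) (M : {ffun 'I_N -> 'I_N}) (j : 'I_N.+1).
Local Notation ins := (ins_rightmost M j).

Lemma ins_rightmost_max : ins ord_max = j :> nat.
Proof. by rewrite ffunE eqxx inordK // ltnS ltnW. Qed.

Lemma ins_rightmost_left (i : 'I_N.+2) : i = j :> nat -> ins i = N.+1 :> nat.
Proof.
move=> ij; have jN : (j : nat) != N.+1 by rewrite neq_ltn ltn_ord.
by rewrite ffunE ij eqxx inordK // ifN // -val_eqE /= ij.
Qed.

Lemma ins_rightmost_bump (k : 'I_N) (i : 'I_N.+2) :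
  i = bump j k :> nat -> ins i = bump j (M k) :> nat.
Proof.
move=> ik; have kN := ltn_ord k; have jN := ltn_ord j; have MkN := ltn_ord (M k).
rewrite ffunE ifN; last by rewrite -val_eqE /= ik; move: kN jN; bump_lia.
rewrite ik eq_sym (negbTE (neq_bump _ _)) bumpK fun_natE inordK //.
by move: jN MkN; bump_lia.
Qed.

Lemma inord_bumpK (k : 'I_N) : (inord (bump j k) : 'I_N.+2) = bump j k :> nat.
Proof. by rewrite inordK //; move: (ltn_ord k) (ltn_ord j); bump_lia. Qed.

Lemma ins_rightmost_inord (k : 'I_N) : ins (inord (bump j k)) = inord (bump j (M k)).
Proof.
by apply: val_inj; rewrite /= inord_bumpK; apply: ins_rightmost_bump; rewrite inord_bumpK.
Qed.

Lemma is_matchingN_ins : is_matchingN ins = is_matchingN M.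
Proof.
apply/is_matchingNP/is_matchingNP => -[fpf inv]; split.
- move=> k; apply/eqP => Mk.
  by have := fpf (inord (bump j k)); rewrite ins_rightmost_inord Mk eqxx.
- move=> k; apply: val_inj; apply: (can_inj (bumpK j)).
  have /(congr1 (@nat_of_ord _)) := inv (inord (bump j k)).
  by rewrite !ins_rightmost_inord !inord_bumpK.
- move=> i; rewrite -val_eqE /=.
  case: (ins_positionP j i) => [->|ij|[k ik]].
  + by rewrite ins_rightmost_max neq_ltn ltn_ord.
  + by rewrite ins_rightmost_left // ij eq_sym neq_ltn ltn_ord.
  + by rewrite (ins_rightmost_bump ik) ik (inj_eq (can_inj (bumpK j))) val_eqE fpf.
- move=> i; case: (ins_positionP j i) => [->|ij|[k ik]].
  + by apply: val_inj; rewrite /= ins_rightmost_left ?ins_rightmost_max.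
  + have -> : ins i = ord_max by apply: val_inj; rewrite /= ins_rightmost_left.
    by apply: val_inj; rewrite /= ins_rightmost_max ij.
  + by apply: val_inj; rewrite /= (ins_rightmost_bump (ins_rightmost_bump ik)) inv ik.
Qed.

Lemma del_rightmost_ins : del_rightmostN ins = M.
Proof.
apply/ffunP => i; apply: val_inj.
rewrite ffunE ins_rightmost_max (ins_rightmost_bump (inord_bumpK i)) bumpK.
by rewrite val_insubd ltn_ord.
Qed.

End Insertion.

Lemma ins_del_rightmost N (lam : {ffun 'I_N.+2 -> 'I_N.+2}) : is_matchingN lam ->
  ins_rightmost (del_rightmostN lam) (inord (lam ord_max)) = lam.
Proof.
move=> /is_matchingNP[fpf inv]; set j := lam ord_max.
have jN : j < N.+1.
  by move: (fpf ord_max) (ltn_ord j); rewrite -val_eqE /= -/j => /eqP; lia.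
have jE : (inord j : 'I_N.+1) = j :> nat by rewrite inordK.
apply/ffunP => i; apply: val_inj; rewrite /=.
case: (ins_positionP (inord j) i) => [->|ij|[k ik]].
- by rewrite ins_rightmost_max jE.
- have -> : i = j by apply: val_inj; rewrite /= ij jE.
  by rewrite ins_rightmost_left ?jE // /j inv.
rewrite (ins_rightmost_bump _ ik) jE ffunE -/j; rewrite jE in ik.
have -> : (inord (bump j k) : 'I_N.+2) = i by apply: val_inj; rewrite /= inordK -ik ?ltn_ord.
have iN : i < N.+1 by rewrite ik; move: (ltn_ord k) jN; bump_lia.
have lij : lam i != j by apply: contraTneq iN => /(can_inj inv) ->; rewrite ltnn.
have liN : lam i != ord_max.
  apply/eqP => /(congr1 lam); rewrite inv -/j => ij.
  by move: (neq_bump j k); rewrite -ik ij eqxx.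
have ltN : unbump j (lam i) < N.
  move: lij liN; rewrite -!val_eqE /= => /eqP ? /eqP ?.
  by move: (ltn_ord (lam i)) jN; bump_lia.
by rewrite val_insubd ltN unbumpK.
Qed.

Lemma is_matchingN_del N (lam : {ffun 'I_N.+2 -> 'I_N.+2}) :
  is_matchingN lam -> is_matchingN (del_rightmostN lam).
Proof.
by move=> mlam; rewrite -(is_matchingN_ins _ (inord (lam ord_max))) ins_del_rightmost.
Qed.

Lemma sum_matchings_ins N (F : {ffun 'I_N.+2 -> 'I_N.+2} -> nat) :
  \sum_(lam | is_matchingN lam) F lam =
  \sum_(M | is_matchingN M) \sum_(j < N.+1) F (ins_rightmost M j).
Proof.
rewrite (reindex_onto (fun x => ins_rightmost x.1 x.2)
           (fun lam => (del_rightmostN lam, inord (lam ord_max)))) /=; last first.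
  by move=> lam mlam; rewrite ins_del_rightmost.
rewrite pair_big_dep; apply: eq_bigl => -[M j] /=.
by rewrite is_matchingN_ins del_rightmost_ins ins_rightmost_max inord_val eqxx !andbT.
Qed.

(* Gap g lies just before position g; it is covered when some edge
   {a, M a} has a < g <= M a. *)
Definition covered N (M : {ffun 'I_N -> 'I_N}) (g : nat) : bool :=
  [exists a : 'I_N, (a < g) && (g <= M a)].

Definition uncovered_upto N (M : {ffun 'I_N -> 'I_N}) (k : nat) : nat :=
  \sum_(g < k.+1) ~~ covered M g.

Definition uncovered N (M : {ffun 'I_N -> 'I_N}) : nat := uncovered_upto M N.

Lemma covered_last N (M : {ffun 'I_N -> 'I_N}) : ~~ covered M N.
Proof. by apply/existsP => -[a /andP[_]]; rewrite leqNgt ltn_ord. Qed.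

Lemma uncovered_leq N (M : {ffun 'I_N -> 'I_N}) : uncovered M <= N.+1.
Proof.
rewrite -[N.+1]card_ord -sum1_card.
by apply: leq_sum => g _; apply: leq_b1.
Qed.

Section CoveredIns.
Variables (N : nat) (M : {ffun 'I_N -> 'I_N}) (j : 'I_N.+1).
Local Notation ins := (ins_rightmost M j).

Lemma ins_rightmost_ordS (a : 'I_N) : a < j -> ins (inord a) = bump j (M a) :> nat.
Proof.
move=> aj; apply: ins_rightmost_bump; rewrite inordK; first by move: aj; bump_lia.
by move: (ltn_ord a); lia.
Qed.

Lemma ins_rightmost_ord_j : ins (inord j) = N.+1 :> nat.
Proof. by apply: ins_rightmost_left; rewrite inordK //; move: (ltn_ord j); lia. Qed.

Lemma crossing_ins : crossing ins = crossing M || covered M j.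
Proof.
have jN := ltn_ord j.
apply/idP/idP.
- case/existsP => p /existsP[q /andP[/andP[pq qlp] lplq]].
  have insN x : ins x <= N.+1 by rewrite -ltnS ltn_ord.
  case: (ins_positionP j p) => [pm|pj|[a pa]].
  + by move: pq; rewrite pm /= ltnNge -ltnS ltn_ord.
  + by move: lplq; rewrite ins_rightmost_left // ltnNge insN.
  case: (ins_positionP j q) => [qm|qj|[b qb]].
  + by move: qlp; rewrite qm /= ltnNge insN.
  + apply/orP; right; apply/existsP; exists a.
    move: pq qlp; rewrite (ins_rightmost_bump _ pa) pa qj.
    by move: (ltn_ord (M a)) (ltn_ord a); bump_lia.
  + apply/orP; left; apply/existsP; exists a; apply/existsP; exists b.
    move: pq qlp lplq.
    by rewrite (ins_rightmost_bump _ pa) (ins_rightmost_bump _ qb) pa qb !ltn_bump2 => -> -> ->.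
- case/orP.
  + case/existsP => a /existsP[b /andP[/andP[ab bma] mab]].
    apply/existsP; exists (inord (bump j a)); apply/existsP; exists (inord (bump j b)).
    by rewrite !ins_rightmost_inord !inord_bumpK !ltn_bump2 ab bma mab.
  + case/existsP => a /andP[aj jma].
    apply/existsP; exists (inord a); apply/existsP; exists (inord j).
    rewrite ins_rightmost_ordS // ins_rightmost_ord_j !inordK; last 2 first.
    * by move: (ltn_ord a); lia.
    * by lia.
    by move: (ltn_ord (M a)) aj jma; bump_lia.
Qed.

Lemma covered_ins_le g : g <= j -> covered ins g = covered M g.
Proof.
move=> gj; have jN := ltn_ord j; apply/existsP/existsP => -[p /andP[pg gp]].
- case: (ins_positionP j p) => [pm|pj|[a pa]].
  + by move: pg gj; rewrite pm /=; lia.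
  + by move: pg gj; rewrite pj; lia.
  + exists a; move: pg gp; rewrite (ins_rightmost_bump _ pa) pa.
    by move: gj (ltn_ord a); bump_lia.
- exists (inord p); have pj : p < j by lia.
  rewrite ins_rightmost_ordS // inordK; last by move: (ltn_ord p); lia.
  by move: pg gp gj; bump_lia.
Qed.

Lemma covered_ins_gt g : j < g <= N.+1 -> covered ins g.
Proof.
move=> /andP[jg gN]; apply/existsP; exists (inord j).
by rewrite ins_rightmost_ord_j inordK; move: (ltn_ord j); lia.
Qed.

Lemma uncovered_ins : uncovered ins = (uncovered_upto M j).+1.
Proof.
have jN := ltn_ord j.
rewrite /uncovered /uncovered_upto.
rewrite -!(big_mkord xpredT (fun g => nat_of_bool (~~ covered _ g))).
rewrite (@big_cat_nat _ _ _ j.+1) //=; last by lia.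
rewrite [X in _ + X]big_nat_recr /= ?covered_last; last by lia.
have -> : \sum_(j.+1 <= g < N.+2) ~~ covered ins g = 0.
  by rewrite big_nat_cond big1 // => g /andP[/andP[jg gN] _]; rewrite covered_ins_gt //; lia.
rewrite add0n addn1; congr _.+1; apply: eq_big_nat => g /andP[_ gj].
by rewrite covered_ins_le.
Qed.

End CoveredIns.

Lemma sum_nat_condb (T : finType) (P Q b : pred T) :
  \sum_(x | P x && Q x) (b x : nat) = \sum_(x | P x) (Q x && b x : nat).
Proof. by rewrite big_mkcondr; apply: eq_bigr => x _; case: (Q x). Qed.

Lemma sum_prefix_count_geq (p : pred nat) L s :
  \sum_(j < L) (p j && (s <= \sum_(g < j.+1) p g)) = \sum_(g < L) p g - s.-1.
Proof.
elim: L => [|L IH]; first by rewrite !big_ord0.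
rewrite !big_ord_recr /= IH; set X := \sum_(i < L) p i.
by case: (p L) => /=; rewrite ?addn0 ?addn1 //; case: (leqP s X.+1) => /=; lia.
Qed.

Lemma sum_nat_leq z a b : \sum_(a <= t < b) (t <= z) = minn z.+1 b - a.
Proof.
elim: b => [|b IH]; first by rewrite big_geq //; lia.
case: (leqP a b) => ab; last by rewrite big_geq //; lia.
by rewrite big_nat_recr //= IH; case: (leqP b z) => /=; lia.
Qed.

Definition nc_atleast N t :=
  \sum_(M : {ffun 'I_N -> 'I_N} | is_matchingN M && ~~ crossing M) (t <= uncovered M).

Lemma nc_atleast_empty s : nc_atleast 0 s = (s <= 1).
Proof.
have id0 (M : {ffun 'I_0 -> 'I_0}) : M = [ffun i => i] by apply/ffunP => -[].
rewrite /nc_atleast (big_pred1 [ffun i => i]) => [|M].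
  by rewrite /uncovered /uncovered_upto big_ord1 (negbTE (covered_last _)).
rewrite (id0 M) inE eqxx; apply/andP; split; first by apply/forallP => -[].
by apply/existsP => -[[]].
Qed.

Lemma nc_atleast0 N : nc_atleast N 0 = nc_atleast N 1.
Proof.
apply: eq_bigr => M _; rewrite /uncovered /uncovered_upto big_ord_recr /=.
by rewrite covered_last addn1.
Qed.

(* For noncrossing M, ins_rightmost M j is noncrossing iff gap j is uncovered,
   and then its uncovered gaps are those of M up to j and the new last gap. *)
Lemma nc_atleast_ins N s :
  nc_atleast N.+2 s.+1 = \sum_(maxn s 1 <= t < N.+2) nc_atleast N t.
Proof.
rewrite /nc_atleast sum_nat_condb sum_matchings_ins [RHS]exchange_big /=.
rewrite (bigID (@crossing _)) /= big1 ?add0n => [|M /andP[_ cM]]; last first.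
  by apply: big1 => j _; rewrite crossing_ins cM.
apply: eq_bigr => M /andP[_ /negbTE cM].
under eq_bigr => j _ do rewrite crossing_ins uncovered_ins cM ltnS /=.
rewrite /uncovered_upto (sum_prefix_count_geq (fun g => ~~ covered M g)) sum_nat_leq.
change (\sum_(g < N.+1) ~~ covered M g) with (uncovered M).
by have := uncovered_leq M; rewrite /uncovered; lia.
Qed.

Lemma mu_card_crossing n : mu_card m1212 n.+1 =
  \sum_(lam : {ffun 'I_(n.*2).+2 -> 'I_(n.*2).+2} | is_matchingN lam)
     (crossing lam && ~~ crossing (del_rightmostN lam)).
Proof.
rewrite /mu_card -sum1_card big_mkcond [RHS]big_mkcond; apply: eq_bigr => lam _.
rewrite inE; change (is_matching lam) with (is_matchingN lam).
case: (boolP (is_matchingN lam)) => //= mlam.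
change (contains lam m1212) with (containsN lam m1212).
change (contains (del_rightmost lam) m1212) with (containsN (del_rightmostN lam) m1212).
by rewrite !containsN_m1212 ?is_matchingN_del //; case: andP.
Qed.

Lemma mu_card_nc n :
  mu_card m1212 n.+1 + nc_atleast (n.*2).+2 0 = n.*2.+1 * nc_atleast n.*2 0.
Proof.
rewrite mu_card_crossing /nc_atleast !sum_nat_condb !sum_matchings_ins -big_split.
rewrite big_distrr; apply: eq_bigr => M _ /=; rewrite -big_split /=.
under eq_bigr => j _ do rewrite crossing_ins del_rightmost_ins.
case: (crossing M) => /=; first by rewrite muln0 big1.
rewrite (eq_bigr (fun _ => 1)) => [|j _]; last by case: covered.
by rewrite sum_nat_const card_ord muln1.
Qed.

Fixpoint ballot (m : nat) : nat -> nat :=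
  match m with
  | 0 => fun _ => 1
  | m'.+1 => fix ballotS s := if s is s'.+1 then ballotS s' + ballot m' s'.+2 else 0
  end.

Lemma ballot0 s : ballot 0 s = 1. Proof. by []. Qed.
Lemma ballotS0 m : ballot m.+1 0 = 0. Proof. by []. Qed.
Lemma ballotSS m s : ballot m.+1 s.+1 = ballot m.+1 s + ballot m s.+2. Proof. by []. Qed.
Arguments ballot : simpl never.

Lemma sum_ballot m s : \sum_(j < m.+1) ballot (m - j) (s + j) = ballot m s.+1.
Proof.
elim: m s => [|m IH] s; first by rewrite big_ord1.
rewrite big_ord_recl subn0 addn0 ballotSS -IH; congr (_ + _).
by apply: eq_bigr => j _; rewrite lift0 subSS addSnnS.
Qed.

Lemma ballot_bin m s : ballot m.+1 s + 'C(m.*2 + s.+1, m) = 'C(m.*2 + s.+1, m.+1).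
Proof.
elim: m s => [|m IHm] s.
  elim: s => [|s IHs]; first by rewrite ballotS0.
  by rewrite ballotSS ballot0 !bin0 !bin1 in IHs *; lia.
elim: s => [|s IHs].
  rewrite ballotS0 add0n -[in RHS](@bin_sub _ m.+2); last by lia.
  by congr 'C(_, _); lia.
rewrite ballotSS; have := IHm s.+2; rewrite (_ : m.*2 + s.+3 = m.+1.*2 + s.+1); last by lia.
move: IHs; rewrite (_ : m.+1.*2 + s.+2 = (m.+1.*2 + s.+1).+1); last by lia.
by move: (m.+1.*2 + s.+1) => K; rewrite !binS; lia.
Qed.

Lemma nc_atleast_ballot n s : 0 < s ->
  nc_atleast n.*2 s = if s <= n.+1 then ballot (n.+1 - s) s else 0.
Proof.
elim: n s => [|n IH] [|s] // _; first by rewrite nc_atleast_empty; case: s.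
set G := fun t => if t <= n.+1 then ballot (n.+1 - t) t else 0.
have G0 t : n.+1 < t -> G t = 0 by rewrite /G => /ltn_geF ->.
rewrite doubleS nc_atleast_ins (eq_big_nat _ _ (F2 := G)) => [|t /andP[t1 _]]; last first.
  by apply: IH; lia.
set a := maxn s 1; case: (leqP a n.+1) => an; last first.
  rewrite big_nat_cond big1 => [|t /andP[/andP[st _] _]]; last by rewrite G0 //; lia.
  by case: ifP => //; lia.
rewrite (@big_cat_nat _ _ _ n.+2) /=; [|lia|by rewrite -addnn; lia].
rewrite [X in _ + X]big_nat_cond [X in _ + X]big1 ?addn0 => [|t /andP[/andP[t2 _] _]].
  2: by rewrite G0 //; lia.
rewrite -{1}(add0n a) big_addn big_mkord (_ : n.+2 - a = (n.+1 - a).+1); last by lia.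
rewrite (eq_bigr (fun i : 'I_(n.+1 - a).+1 => ballot (n.+1 - a - i) (a + i))); last first.
  by move=> i _; rewrite /G ifT; [congr ballot|]; have := ltn_ord i; lia.
rewrite sum_ballot ifT; last by lia.
by case: s @a an => [|s] /= an; rewrite ?ballotSS ?ballotS0 //; congr ballot; lia.
Qed.

Lemma ballot_conv m a b :
  \sum_(k < m.+1) ballot k a * ballot (m - k) b = ballot m (a + b).
Proof.
elim: m a b => [|m IHm] a b; first by rewrite big_ord1.
elim: a b => [|a IHa] b.
  rewrite big_ord_recl big1 ?addn0 => [|k _]; last by rewrite lift0 ballotS0.
  by rewrite ballot0 mul1n subn0.
rewrite big_ord_recl ballot0 mul1n.
under eq_bigr => k _ do rewrite lift0 ballotSS mulnDl subSS.
rewrite big_split addnA; move: (IHa b); rewrite big_ord_recl ballot0 mul1n subn0.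
rewrite (eq_bigr (fun k : 'I_m.+1 => ballot k.+1 a * ballot (m - k) b)) => [->|k _].
  by rewrite IHm !addSn ballotSS.
by rewrite lift0 subSS.
Qed.

Lemma mul_ballot1 n : n.+1 * ballot n 1 = 'C(n.*2, n).
Proof.
case: n => [|m] //.
have := ballot_bin m 1; have := mul_bin_left m.+1.*2 m.
rewrite -addn2 doubleS -addn2 (_ : m.*2 + 2 - m = m.+2); last by lia.
by move: (ballot _ _) ('C(_, m.+1)) ('C(_, m)) => b X Y; nia.
Qed.

Lemma ballot1_catalan n : ballot n 1 = catalan n.
Proof. by rewrite /catalan -mul_ballot1 mulKn. Qed.

Lemma mul_catalan n : n.+1 * catalan n = 'C(n.*2, n).
Proof. by rewrite -ballot1_catalan mul_ballot1. Qed.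

Lemma catalan0 : catalan 0 = 1. Proof. by []. Qed.

Lemma nc_atleast_catalan n : nc_atleast n.*2 0 = catalan n.
Proof. by rewrite nc_atleast0 nc_atleast_ballot // subn1 ballot1_catalan. Qed.

Lemma catalan_conv n : \sum_(k < n.+1) catalan k * catalan (n - k) = catalan n.+1.
Proof.
rewrite -ballot1_catalan ballotSS ballotS0 -(ballot_conv n 1 1).
by apply: eq_bigr => k _; rewrite !ballot1_catalan.
Qed.

Lemma bin_mid n : 'C(n.*2.+1, n.+1) = 'C(n.*2.+1, n).
Proof. by rewrite -[in RHS]bin_sub; [congr 'C(_, _) | ]; rewrite -addnn; lia. Qed.

Lemma odd_mul_catalan n : n.*2.+1 * catalan n = 'C(n.*2.+1, n).
Proof.
apply/eqP; rewrite -(eqn_pmul2l (ltn0Sn n)) mulnCA mul_catalan -bin_mid.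
by rewrite (mul_bin_diag n.*2.+1 n).
Qed.

Lemma catalan_rec n : n.+2 * catalan n.+1 = (n.*2.+1).*2 * catalan n.
Proof. by rewrite mul_catalan doubleS binS bin_mid -doubleMl odd_mul_catalan addnn. Qed.

Lemma catalanS_bin n : catalan n.+2 + 'C(n.*2.+3, n) = 'C(n.*2.+3, n.+1).
Proof. by rewrite -ballot1_catalan ballotSS ballotS0 add0n -addn3 ballot_bin. Qed.

(* Otherwise /= unfolds mu_card at successors into the cardinal it denotes. *)
Arguments mu_card : simpl never.

Lemma mu_card_succ n : mu_card m1212 n.+1 + catalan n.+1 = n.*2.+1 * catalan n.
Proof. by have := mu_card_nc n; rewrite -doubleS !nc_atleast_catalan. Qed.

Lemma mu_card0 k (sigma : {ffun 'I_(k.*2) -> 'I_(k.*2)}) : mu_card sigma 0 = 0.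
Proof. by []. Qed.

Lemma mu_card1 : mu_card m1212 1 = 0.
Proof. by have := mu_card_succ 0; rewrite (_ : catalan 1 = 1) // catalan0; lia. Qed.

Lemma mu_card_bin n : mu_card m1212 n.+2 = 'C(n.*2.+3, n).
Proof.
have := mu_card_succ n.+1; rewrite odd_mul_catalan doubleS -catalanS_bin.
by rewrite addnC => /addnI.
Qed.

Lemma sum_rev_conv (F : nat -> nat -> nat) n :
  \sum_(k < n.+1) F k (n - k) = \sum_(k < n.+1) F (n - k) k.
Proof.
rewrite (reindex_inj rev_ord_inj); apply: eq_bigr => k _ /=.
by rewrite subSS subKn // -ltnS.
Qed.

Lemma sum_odd_catalan_conv n :
  \sum_(k < n.+1) k.*2.+1 * catalan k * catalan (n - k) = n.+1 * catalan n.+1.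
Proof.
apply/eqP; rewrite -(eqn_pmul2l (ltn0Sn 1)) !mul2n -addnn.
rewrite {2}(sum_rev_conv (fun k l => k.*2.+1 * catalan k * catalan l)) -big_split /=.
rewrite doubleMl -catalan_conv big_distrr; apply/eqP/eq_bigr => k _ /=.
rewrite mulnAC -!mulnA -mulnDl [_ * catalan k]mulnC.
by congr (_ * _); have := ltn_ord k; lia.
Qed.

Lemma sum_catalan_mu n :
  \sum_(k < n.+1) catalan k * mu_card m1212 (n - k).+1 + catalan n.+2
  = n.+2 * catalan n.+1.
Proof.
have sum_mu : \sum_(k < n.+1) catalan k * mu_card m1212 (n - k).+1
             + \sum_(k < n.+1) catalan k * catalan (n - k).+1 = n.+1 * catalan n.+1.
  rewrite -big_split -sum_odd_catalan_conv.
  rewrite (sum_rev_conv (fun k l => k.*2.+1 * catalan k * catalan l)).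
  by apply: eq_bigr => k _ /=; rewrite -mulnDr mu_card_succ mulnC.
have sum_cat : \sum_(k < n.+1) catalan k * catalan (n - k).+1 + catalan n.+1 = catalan n.+2.
  rewrite -[catalan n.+2]catalan_conv [RHS]big_ord_recr /= subnn catalan0 muln1.
  by congr (_ + _); apply: eq_bigr => k _; rewrite subSn // -ltnS.
lia.
Qed.

Lemma mu_card_rec n : 2 <= n -> mu_card m1212 n =
  \sum_(k < n.-1) (k.*2.+1 * catalan k * catalan (n - k - 2)
                   + catalan k * mu_card m1212 (n - k - 1)).
Proof.
case: n => [|[|n]] // _.
have odd_part : \sum_(k < n.+1) k.*2.+1 * catalan k * catalan (n.+2 - k - 2)
                = n.+1 * catalan n.+1.
  by rewrite -sum_odd_catalan_conv; apply: eq_bigr => k _; rewrite -subnDA addn2 subSS.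
have mu_part : \sum_(k < n.+1) catalan k * mu_card m1212 (n.+2 - k - 1)
               = \sum_(k < n.+1) catalan k * mu_card m1212 (n - k).+1.
  by apply: eq_bigr => k _; rewrite -subnDA addn1 subSS subSn // -ltnS.
rewrite big_split /= odd_part mu_part.
by have := mu_card_succ n.+1; have := sum_catalan_mu n; nia.
Qed.

Lemma mu_card_rec_gf n : mu_card m1212 n.+2 = 3 * mu_card m1212 n.+1
  + \sum_(i < n.+1) catalan i.+1 * mu_card m1212 (n - i) + catalan n.+1.
Proof.
have shift : \sum_(i < n.+1) catalan i.+1 * mu_card m1212 (n - i) + mu_card m1212 n.+1
           = \sum_(k < n.+1) catalan k * mu_card m1212 (n - k).+1.
  rewrite big_ord_recr big_ord_recl /= subnn muln0 addn0 subn0 catalan0 mul1n addnC.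
  by congr (_ + _); apply: eq_bigr => i _; rewrite bump0 subnSK.
have := mu_card_succ n.+1; have := mu_card_succ n; have := sum_catalan_mu n.
have := catalan_rec n; rewrite -shift; nia.
Qed.

Section FormalPowerSeries.
Local Open Scope ring_scope.
Implicit Types (a b c d u v p : fps).

Definition fps_trunc a (n : nat) : {poly rat} := \poly_(i < n.+1) a i.

Lemma fps_mulE a b n N :
  (n <= N)%N -> fps_mul a b n = (fps_trunc a N * fps_trunc b N)`_n.
Proof.
move=> nN; rewrite coefM; apply: eq_bigr => i _.
by rewrite !coef_poly !ifT //; have := ltn_ord i; lia.
Qed.

Lemma coefMl_eq (p q r : {poly rat}) n :
  (forall i, (i <= n)%N -> p`_i = q`_i) -> (p * r)`_n = (q * r)`_n.
Proof.
move=> pq; rewrite !coefM; apply: eq_bigr => i _.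
by rewrite pq //; have := ltn_ord i; lia.
Qed.

Lemma fps_mulC a b : fps_mul a b =1 fps_mul b a.
Proof. by move=> n; rewrite !(fps_mulE _ _ (leqnn n)) mulrC. Qed.

Lemma fps_mulA a b c : fps_mul (fps_mul a b) c =1 fps_mul a (fps_mul b c).
Proof.
have truncM a' b' n : forall i, (i <= n)%N ->
    (fps_trunc (fps_mul a' b') n)`_i = (fps_trunc a' n * fps_trunc b' n)`_i.
  by move=> i ni; rewrite coef_poly ltnS ni (fps_mulE _ _ ni).
move=> n; rewrite !(fps_mulE _ _ (leqnn n)) (coefMl_eq _ (truncM a b n)).
by rewrite [in RHS]mulrC (coefMl_eq _ (truncM b c n)) [in RHS]mulrC mulrA.
Qed.

Lemma eq_fps_mul a b c d : a =1 c -> b =1 d -> fps_mul a b =1 fps_mul c d.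
Proof. by move=> ac bd n; apply: eq_bigr => i _; rewrite ac bd. Qed.

Lemma fps_mul1 a : fps_mul a (fps_const 1) =1 a.
Proof.
move=> n; rewrite /fps_mul big_ord_recr /= subnn mulr1 big1 ?add0r // => i _.
by rewrite -subnSK // mulr0.
Qed.

Lemma fps_mulX a n : fps_mul fps_X a n = if n is n'.+1 then a n' else 0.
Proof.
case: n => [|n]; first by rewrite /fps_mul big_ord1 mul0r.
rewrite /fps_mul !big_ord_recl big1 => [|i _]; last by rewrite mul0r.
by rewrite /fps_X /= mul0r mul1r add0r addr0 bump0 subSS subn0.
Qed.

Lemma fps_invS a n : fps_inv a n.+1 =
  - (a 0%N)^-1 * \sum_(i < n.+1) a i.+1 * fps_inv a (n - i)%N.
Proof.
have size_inv m : size (fps_inv_list a m) = m.+1.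
  by elim: m => //= m IH; rewrite size_rcons IH.
have nth_inv m k : (k <= m)%N -> nth 0 (fps_inv_list a m) k = fps_inv a k.
  elim: m k => [|m IH] k km; first by case: k km.
  case: (ltnP k m.+1) => km'; first by rewrite /= nth_rcons size_inv km' IH.
  by have -> : k = m.+1 by lia.
rewrite {1}/fps_inv /= nth_rcons size_inv ltnn eqxx.
by congr (_ * _); apply: eq_bigr => i _; rewrite nth_inv // leq_subr.
Qed.

Lemma fps_mulV a : a 0%N != 0 -> fps_mul a (fps_inv a) =1 fps_const 1.
Proof.
move=> a0 [|n]; first by rewrite /fps_mul big_ord1 /fps_inv /= mulfV.
rewrite /fps_mul big_ord_recl /= subn0 fps_invS mulrA mulrN mulfV // mulN1r addrC.
by under eq_bigr => i _ do rewrite bump0 subSS; rewrite subrr.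
Qed.

Lemma fps_mulIr d u v : d 0%N != 0 -> fps_mul u d =1 fps_mul v d -> u =1 v.
Proof.
move=> d0 uv k; elim/ltn_ind: k => k IH.
have := uv k; rewrite /fps_mul !big_ord_recr /= subnn.
rewrite (eq_bigr (fun i : 'I_k => v i * d (k - i)%N)) => [|i _]; last by rewrite IH.
by move/addrI/(mulIf d0).
Qed.

Lemma fps_divP d u p : d 0%N != 0 -> fps_mul u d =1 p -> u =1 fps_mul p (fps_inv d).
Proof.
move=> d0 ud; apply: (fps_mulIr d0) => n.
have invd_d : fps_mul (fps_inv d) d =1 fps_const 1.
  by move=> k; rewrite fps_mulC fps_mulV.
by rewrite ud fps_mulA (eq_fps_mul (frefl p) invd_d) fps_mul1.
Qed.
End FormalPowerSeries.

Section MuGeneratingFunction.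
Local Open Scope ring_scope.
Local Notation c k := ((catalan k)%:R : rat).

Let A : fps := fps_sub (fps_const 1) (fps_scale 2%:R (fps_mul fps_X catalan_gf)).
Let B : fps := fps_sub (fps_const 1) (fps_mul fps_X catalan_gf).

Let A0 : A 0%N = 1. Proof. by rewrite /A /fps_sub /fps_scale fps_mulX mulr0 subr0. Qed.
Let AS k : A k.+1 = - 2%:R * c k.
Proof. by rewrite /A /fps_sub /fps_scale fps_mulX sub0r mulNr. Qed.
Let B0 : B 0%N = 1. Proof. by rewrite /B /fps_sub fps_mulX subr0. Qed.
Let BS k : B k.+1 = - c k. Proof. by rewrite /B /fps_sub fps_mulX sub0r. Qed.

Definition mu_numer : fps := fps_mul fps_X (fps_sub catalan_gf (fps_const 1)).
Definition mu_denom : fps := fps_mul A B.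

Lemma mu_denom0 : mu_denom 0%N = 1.
Proof. by rewrite /mu_denom /fps_mul big_ord1 A0 B0 mulr1. Qed.

Lemma mu_denomS k :
  mu_denom k.+1 = - 3%:R * c k + 2%:R * \sum_(i < k) c i * c (k.-1 - i)%N.
Proof.
rewrite /mu_denom /fps_mul big_ord_recl A0 mul1r subn0 BS big_ord_recr /= subnn B0 mulr1 AS.
rewrite (eq_bigr (fun i : 'I_k => 2%:R * (c i * c (k.-1 - i)%N))) => [|i _]; last first.
  rewrite bump0 subSS AS (_ : (k - i = (k.-1 - i).+1)%N) ?BS; last by have := ltn_ord i; lia.
  by rewrite mulNr mulrNN mulrA.
rewrite -big_distrr /=; set S := \sum_(i < k) _; lra.
Qed.

Lemma mu_denom1 : mu_denom 1%N = - 3%:R.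
Proof. by rewrite mu_denomS big_ord0 mulr0 addr0 catalan0 mulr1. Qed.

Lemma mu_denomSS k : mu_denom k.+2 = - c k.+1.
Proof.
rewrite mu_denomS /=; under eq_bigr => i _ do rewrite -natrM.
by rewrite -natr_sum catalan_conv; set x := c k.+1; lra.
Qed.

Lemma mu_gf_mul_denom : fps_mul (mu_gf m1212) mu_denom =1 mu_numer.
Proof.
move=> n; rewrite fps_mulC /mu_numer fps_mulX /mu_gf /fps_mul.
case: n => [|[|n]].
- by rewrite big_ord1 mulr0.
- rewrite !big_ord_recl big_ord0 /= bump0 subn0 subnn mu_card0 mu_card1.
  by rewrite /fps_sub /fps_const /catalan_gf catalan0 !mulr0 !addr0 subrr.
have recR : (mu_card m1212 n.+2)%:R = 3%:R * (mu_card m1212 n.+1)%:R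
   + \sum_(i < n.+1) c i.+1 * (mu_card m1212 (n - i))%:R + c n.+1 :> rat.
  by rewrite mu_card_rec_gf natrD natrD natrM natr_sum; under eq_bigr => i _ do rewrite natrM.
rewrite big_ord_recl big_ord_recl /= !bump0 subn0 subSS mu_denom0 mu_denom1.
under eq_bigr => i _ do rewrite !bump0 !subSS mu_denomSS mulNr.
rewrite sumrN /fps_sub /fps_const /catalan_gf subr0 recR subn0 mul1r.
set S := \sum_(i < n.+1) _; set m := (mu_card m1212 n.+1)%:R; lra.
Qed.

Lemma mu_gf_m1212 : mu_gf m1212 =1 fps_mul mu_numer (fps_inv mu_denom).
Proof. by apply: fps_divP; [rewrite mu_denom0 oner_neq0 | exact: mu_gf_mul_denom]. Qed.
End MuGeneratingFunction.

Theorem proposition3 (n : nat) (hn : (2 <= n)%N) :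
  (mu_card m1212 n =
     \sum_(k < n.-1)
        ((k.*2.+1 * catalan k * catalan (n - k - 2)
          + catalan k * mu_card m1212 (n - k - 1)))%N)%N
  /\ (forall m : nat,
        mu_gf m1212 m =
        fps_mul
          (fps_mul fps_X (fps_sub catalan_gf (fps_const 1)))
          (fps_inv (fps_mul
                      (fps_sub (fps_const 1)
                               (fps_scale 2%:R (fps_mul fps_X catalan_gf)))
                      (fps_sub (fps_const 1) (fps_mul fps_X catalan_gf))))
          m)
  /\ mu_card m1212 n = 'C(n.*2.-1, n - 2).
Proof.
split; first exact: mu_card_rec.
split; first exact: mu_gf_m1212.
by case: n hn => [|[|n]] // _; rewrite mu_card_bin !doubleS !subSS subn0.
Qed.
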